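(* The following two statements are equivalent. (A) For every positive integer $k$ and every digraph $D$ of order $n \ge 12k+3$ such that $d_{D}^{+}(u) + d_{D}^{-}(v) \ge n$ for every two distinct vertices $u,v$ with $(u,v)\notin A(D)$, $D$ has a directed $2$-factor with exactly $k$ directed cycles, each of length at least $3$. (B) For every positive integer $k$, every balanced bipartite graph $G$ of order $2n$ with $n \ge 12k+3$ and every perfect matching $M$ of $G$, if $\sigma_{1,1}(G)\ge n+2$ then $G$ has a $2$-factor with exactly $k$ cycles, each of length at least $6$, containing every edge of $M$.
   Context: A digraph is finite, without loops or multiple arcs (opposite arcs allowed); $d_D^+$, $d_D^-$ denote out- and in-degree. A directed $2$-factor is a spanning subdigraph each of whose components is a directed cycle. Graphs are finite and simple; a $2$-factor is a spanning subgraph each of whose components is a cycle. For a bipartite graph $G$ with partite sets $X,Y$, $\sigma_{1,1}(G) = \min\{d_G(x)+d_G(y) : x \in X, y \in Y, xy \notin E(G)\}$ if $G$ is not complete bipartite, and $+\infty$ otherwise. *)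

From mathcomp Require Import all_boot all_order all_fingroup.
Set Implicit Arguments. Unset Strict Implicit. Unset Printing Implicit Defensive.

(* A digraph on the finite vertex type T is an arc relation a : rel T;
   it has no loops (irreflexive a); multiple arcs are impossible,
   opposite arcs are allowed. Its order is #|T|. *)
Definition outdeg (T : finType) (a : rel T) (u : T) : nat := #|[set v | a u v]|.
Definition indeg (T : finType) (a : rel T) (v : T) : nat := #|[set u | a u v]|.

(* A directed 2-factor of D with exactly k directed cycles, each of length
   at least 3: a spanning subdigraph in which every vertex has in- and
   out-degree 1, i.e. a permutation s of V(D) with (u, s u) an arc for all u;
   its components (directed cycles) are the cycles (porbits) of s. *)
Definition has_dir_2factor_k (T : finType) (a : rel T) (k : nat) : Prop :=
  exists s : {perm T},
    [/\ forall u, a u (s u),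
        #|porbits s| = k
      & forall C, C \in porbits s -> 3 <= #|C|].

Definition bdegX (X Y : finType) (e : X -> Y -> bool) (x : X) : nat :=
  #|[set y | e x y]|.
Definition bdegY (X Y : finType) (e : X -> Y -> bool) (y : Y) : nat :=
  #|[set x | e x y]|.

(* sigma_{1,1}(G) >= m, where sigma_{1,1} = +oo for complete bipartite G. *)
Definition sigma11_ge (X Y : finType) (e : X -> Y -> bool) (m : nat) : Prop :=
  forall x y, ~~ e x y -> m <= bdegX e x + bdegY e y.

Definition edge_set (X Y : finType) (e : X -> Y -> bool) (F : {set X * Y}) :=
  forall p, p \in F -> e p.1 p.2.

Definition perfect_matching (X Y : finType) (e : X -> Y -> bool)
    (M : {set X * Y}) : Prop :=
  [/\ edge_set e M,
      forall x, #|[set y | (x, y) \in M]| = 1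
    & forall y, #|[set x | (x, y) \in M]| = 1].

Definition adjF (X Y : finType) (F : {set X * Y}) : rel (X + Y) :=
  fun u v => match u, v with
             | inl x, inr y => (x, y) \in F
             | inr y, inl x => (x, y) \in F
             | _, _ => false
             end.

Definition components (X Y : finType) (F : {set X * Y}) : {set {set X + Y}} :=
  [set [set v | connect (adjF F) u v] | u : X + Y].

(* F is (the edge set of) a 2-factor of G with exactly k cycles, each of
   length at least 6: a spanning subgraph in which every vertex has degree 2
   (so each component is a cycle), having exactly k components, each with at
   least 6 vertices (= its length). *)
Definition two_factor_k (X Y : finType) (e : X -> Y -> bool)
    (F : {set X * Y}) (k : nat) : Prop :=
  [/\ edge_set e F,
      forall x, #|[set y | (x, y) \in F]| = 2,
      forall y, #|[set x | (x, y) \in F]| = 2,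
      #|components F| = k
    & forall C, C \in components F -> 6 <= #|C|].

Definition statementA : Prop :=
  forall (k : nat), 0 < k ->
  forall (T : finType) (a : rel T), irreflexive a ->
    12 * k + 3 <= #|T| ->
    (forall u v, u != v -> ~~ a u v -> #|T| <= outdeg a u + indeg a v) ->
    has_dir_2factor_k a k.

Definition statementB : Prop :=
  forall (k : nat), 0 < k ->
  forall (X Y : finType) (e : X -> Y -> bool) (n : nat),
    #|X| = n -> #|Y| = n -> 12 * k + 3 <= n ->
    forall M : {set X * Y}, perfect_matching e M ->
    sigma11_ge e (n + 2) ->
    exists F : {set X * Y}, two_factor_k e F k /\ M \subset F.

From mathcomp Require Import all_boot all_order all_fingroup zify.
Set Implicit Arguments. Unset Strict Implicit. Unset Printing Implicit Defensive.

(* A perfect matching m : X -> Y identifies Y with X, and turns the bipartite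
   graph G into the digraph D on X with an arc x -> x' iff x != x' and
   x m(x') is an edge.  Since every x is matched, deg_G x = d+_D(x) + 1 and
   deg_G m(x) = d-_D(x) + 1, so sigma_{1,1}(G) >= n + 2 is exactly the
   Ore-type condition on D.  A 2-factor of G through the matching is the
   edge set {x m(x), x m(s x)} of a fixed-point-free permutation s whose
   arcs x -> s x lie in D, i.e. a directed 2-factor of D, and a cycle of
   length l of s becomes a cycle of length 2l of G.  Every digraph arises
   in this way, from D plus the identity matching on two copies of V(D). *)

Lemma card1_uniq (T : finType) (A : {set T}) (a b : T) :
  #|A| = 1 -> a \in A -> b \in A -> a = b.
Proof. by move/eqP/cards1P=> [c ->]; rewrite !inE => /eqP -> /eqP ->. Qed.

Lemma card2_other_uniq (T : finType) (A : {set T}) (a b c : T) :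
  #|A| = 2 -> a \in A -> b \in A -> c \in A -> b != a -> c != a -> b = c.
Proof.
move=> A2 aA bA cA ba ca.
apply: (@card1_uniq _ (A :\ a)); rewrite ?inE ?ba ?ca //.
by move: A2; rewrite (cardsD1 a) aA => -[].
Qed.

Lemma porbit_perm_mem (T : finType) (s : {perm T}) (x z : T) :
  (s z \in porbit s x) = (z \in porbit s x).
Proof. by rewrite -!eq_porbit_mem -(porbit_perm s 1 z) expg1. Qed.

Definition matching_graph (X Y : finType) (m : X -> Y) : {set X * Y} :=
  [set p | p.2 == m p.1].

Definition matching_digraph (X Y : finType) (e : X -> Y -> bool) (m : X -> Y)
    : rel X :=
  fun x x' => (x != x') && e x (m x').

Definition cycle_edges (X Y : finType) (m : X -> Y) (s : {perm X})
    : {set X * Y} :=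
  [set p | (p.2 == m p.1) || (p.2 == m (s p.1))].

Lemma perfect_matching_graph (X Y : finType) (e : X -> Y -> bool)
    (M : {set X * Y}) :
  perfect_matching e M ->
  exists m : X -> Y, [/\ bijective m, M = matching_graph m & forall x, e x (m x)].
Proof.
case=> eM degMX degMY.
have partner x : exists y, (x, y) \in M.
  have /card_gt0P [y] : 0 < #|[set y | (x, y) \in M]| by rewrite degMX.
  by rewrite inE; exists y.
have mate y : exists x, (x, y) \in M.
  have /card_gt0P [x] : 0 < #|[set x | (x, y) \in M]| by rewrite degMY.
  by rewrite inE; exists x.
pose m x := xchoose (partner x); pose minv y := xchoose (mate y).
have mE x y : ((x, y) \in M) = (y == m x).
  have xmM : (x, m x) \in M := xchooseP (partner x).
  by apply/idP/eqP => [xyM|->] //; apply: (card1_uniq (degMX x)); rewrite inE.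
have minvE x y : ((x, y) \in M) = (x == minv y).
  have minvyM : (minv y, y) \in M := xchooseP (mate y).
  by apply/idP/eqP => [xyM|->] //; apply: (card1_uniq (degMY y)); rewrite inE.
have mK : cancel m minv by move=> x; apply/esym/eqP; rewrite -minvE mE.
have minvK : cancel minv m by move=> y; apply/esym/eqP; rewrite -mE minvE.
exists m; split; first exact: Bijective mK minvK.
  by apply/setP => -[x y]; rewrite inE mE.
by move=> x; apply: (eM (x, m x)); rewrite mE.
Qed.

Section MatchingCorrespondence.

Variables (X Y : finType) (m : X -> Y) (minv : Y -> X).
Hypotheses (mK : cancel m minv) (minvK : cancel minv m).

Let m_inj : injective m := can_inj mK.

Lemma eq_mate (x : X) (y : Y) : (y == m x) = (x == minv y).
Proof. by rewrite -{1}(minvK y) (inj_eq m_inj) eq_sym. Qed.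

Lemma matching_graph_perfect (e : X -> Y -> bool) :
  (forall x, e x (m x)) -> perfect_matching e (matching_graph m).
Proof.
move=> e_mate; split.
- by move=> [x y]; rewrite inE => /eqP ->.
- by move=> x; rewrite -(cards1 (m x)); apply: eq_card => y; rewrite !inE.
- move=> y; rewrite -(cards1 (minv y)); apply: eq_card => x.
  by rewrite !inE eq_mate.
Qed.

Definition proj_X (v : X + Y) : X :=
  match v with inl x => x | inr y => minv y end.

Definition with_mates (P : {set X}) : {set X + Y} := [set v | proj_X v \in P].

Lemma card_with_mates (P : {set X}) : #|with_mates P| = #|P|.*2.
Proof.
have inl_inj : injective (@inl X Y) by move=> ? ? [].
have inr_inj : injective (@inr X Y) by move=> ? ? [].
have -> : with_mates P = inl @: P :|: inr @: (minv @^-1: P).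
  apply/setP => -[x|y]; rewrite !inE /=.
    by rewrite (mem_imset _ _ inl_inj); case: imsetP => [[? _ //]|_]; rewrite orbF.
  by rewrite (mem_imset _ _ inr_inj) inE; case: imsetP => [[? _ //]|_].
rewrite cardsU (card_imset _ inl_inj) (card_imset _ inr_inj).
rewrite (on_card_preimset (onW_bij _ (Bijective minvK mK))).
have -> : inl @: P :&: inr @: (minv @^-1: P) = set0.
  apply/setP => v; rewrite !inE.
  by case: imsetP => // -[x _ ->]; case: imsetP => // -[].
by rewrite cards0 subn0 addnn.
Qed.

Lemma with_mates_inj : injective with_mates.
Proof.
move=> P Q PQ; apply/setP => x.
by have := congr1 (fun S : {set X + Y} => inl x \in S) PQ; rewrite !inE.
Qed.

Lemma connect_cycle_edges (s : {perm X}) (u : X + Y) :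
  [set v | connect (adjF (cycle_edges m s)) u v] = with_mates (porbit s (proj_X u)).
Proof.
set E := adjF (cycle_edges m s); set O := porbit s (proj_X u).
have mate_edge y : (minv y, y) \in cycle_edges m s by rewrite inE minvK eqxx.
have succ_path x : connect E (inl x) (inl (s x)).
  apply: (@connect_trans _ E (inr (m (s x)))); apply: connect1;
    by rewrite /E /= inE /= eqxx ?orbT.
have iter_path x i : connect E (inl x) (inl ((s ^+ i)%g x)).
  elim: i => [|i IH]; first by rewrite expg0 perm1.
  by rewrite expgSr permM; apply: connect_trans IH (succ_path _).
have u_proj : connect E u (inl (proj_X u)).
  by case: u {O} => [x|y] /=; [exact: connect0 | apply/connect1/mate_edge].
have O_closed : closed E (with_mates O).
  by move=> [x|y] [x'|y'] //=; rewrite /E /= inE !inE /= => /orP[] /eqP ->;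
    rewrite mK ?porbit_perm_mem.
apply/setP => v; rewrite inE; apply/idP/idP.
  move/(closed_connect O_closed) <-.
  by rewrite inE porbit_id.
rewrite inE => /porbitP [i vi]; apply: (connect_trans u_proj).
apply: (connect_trans (iter_path _ i)); rewrite -vi.
by case: v {vi} => [x|y] //=; apply/connect1/mate_edge.
Qed.

Lemma components_cycle_edges (s : {perm X}) :
  components (cycle_edges m s) = with_mates @: porbits s.
Proof.
apply/setP => C; apply/imsetP/imsetP => [[u _ ->]|[P /imsetP [x _ ->] ->]].
  by exists (porbit s (proj_X u)); [exact: imset_f | exact: connect_cycle_edges].
by exists (inl x) => //; rewrite connect_cycle_edges.
Qed.

Lemma card_components_cycle_edges (s : {perm X}) :
  #|components (cycle_edges m s)| = #|porbits s|.
Proof. by rewrite components_cycle_edges (card_imset _ with_mates_inj). Qed.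

Section FixedPointFree.

Variables (s : {perm X}) (s_fixfree : forall x, s x != x).

Lemma cycle_edges_degX (x : X) : #|[set y | (x, y) \in cycle_edges m s]| = 2.
Proof.
have -> : [set y | (x, y) \in cycle_edges m s] = [set m x; m (s x)].
  by apply/setP => y; rewrite !inE.
by rewrite cards2 (inj_eq m_inj) eq_sym s_fixfree.
Qed.

Lemma cycle_edges_degY (y : Y) : #|[set x | (x, y) \in cycle_edges m s]| = 2.
Proof.
have -> : [set x | (x, y) \in cycle_edges m s] = [set minv y; (s^-1)%g (minv y)].
  apply/setP => x; rewrite !inE /= !eq_mate [x == minv y]eq_sym.
  by rewrite -{2}(permKV s (minv y)) (inj_eq (@perm_inj _ s)) eq_sym.
rewrite cards2; case: eqP => // minv_fixed.
by have := s_fixfree ((s^-1)%g (minv y)); rewrite permKV -minv_fixed eqxx.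
Qed.

End FixedPointFree.

Lemma cycle_edges_of_two_factor (F : {set X * Y}) :
    (forall x, #|[set y | (x, y) \in F]| = 2) ->
    (forall y, #|[set x | (x, y) \in F]| = 2) ->
    matching_graph m \subset F ->
  exists2 s : {perm X}, (forall x, s x != x) & F = cycle_edges m s.
Proof.
move=> degX degY MF.
have mateF x : (x, m x) \in F by apply: (subsetP MF); rewrite inE.
have other x : exists y, ((x, y) \in F) && (y != m x).
  have /card_gt0P [y] : 0 < #|[set y | (x, y) \in F] :\ m x|.
    by move: (degX x); rewrite (cardsD1 (m x)) inE mateF add1n => -[->].
  by rewrite !inE andbC; exists y.
pose o x := xchoose (other x).
have oP x : ((x, o x) \in F) && (o x != m x) := xchooseP (other x).
have o_inj : injective o.
  move=> x x' oxx'; case/andP: (oP x) (oP x') => xoF oxm /andP [x'oF ox'm].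
  apply: (card2_other_uniq (degY (o x')) (a := minv (o x'))); rewrite ?inE //.
  - by rewrite -{2}(minvK (o x')) mateF.
  - by rewrite -oxx'.
  - by rewrite -eq_mate -oxx'.
  - by rewrite -eq_mate.
pose s := perm (inj_comp (can_inj minvK) o_inj).
have sE x : s x = minv (o x) by rewrite permE.
exists s => [x|]; first by rewrite sE eq_sym -eq_mate; case/andP: (oP x).
apply/setP => -[x y]; rewrite inE /= sE minvK.
apply/idP/idP => [xyF|/orP [] /eqP ->]; last 2 first.
- exact: mateF.
- by case/andP: (oP x).
case: eqP => //= /eqP ym; apply/eqP.
case/andP: (oP x) => xoF om.
by apply: (card2_other_uniq (degX x) (a := m x)); rewrite ?inE ?mateF.
Qed.

Lemma two_factor_cycle_edgesP (e : X -> Y -> bool) (s : {perm X}) (k : nat) :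
    (forall x, e x (m x)) -> (forall x, s x != x) ->
  two_factor_k e (cycle_edges m s) k <->
  [/\ forall x, e x (m (s x)), #|porbits s| = k
    & forall C, C \in porbits s -> 3 <= #|C|].
Proof.
move=> e_mate s_fixfree; split.
  case=> eF _ _ ncomp long; split.
  - by move=> x; apply: (eF (x, m (s x))); rewrite inE eqxx orbT.
  - by rewrite -ncomp card_components_cycle_edges.
  - move=> C Cs; have : 6 <= #|with_mates C|.
      by apply: long; rewrite components_cycle_edges imset_f.
    by rewrite card_with_mates; lia.
case=> e_s ncomp long; split.
- by move=> [x y]; rewrite inE => /orP [] /eqP ->.
- exact: cycle_edges_degX.
- exact: cycle_edges_degY.
- by rewrite card_components_cycle_edges.
- move=> C; rewrite components_cycle_edges => /imsetP [P Ps ->].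
  by rewrite card_with_mates; have := long P Ps; lia.
Qed.

Section MatchingDigraph.

Variables (e : X -> Y -> bool) (a : rel X).
Hypotheses (e_mate : forall x, e x (m x)) (aE : a =2 matching_digraph e m).

Lemma bdegX_outdeg (x : X) : bdegX e x = (outdeg a x).+1.
Proof.
rewrite /bdegX -(on_card_preimset (onW_bij _ (Bijective mK minvK))).
have -> : m @^-1: [set y | e x y] = x |: [set x' | a x x'].
  apply/setP => x'; rewrite !inE aE /matching_digraph.
  by case: eqVneq => [<-|]; rewrite ?e_mate.
by rewrite cardsU1 inE aE /matching_digraph eqxx.
Qed.

Lemma bdegY_indeg (x : X) : bdegY e (m x) = (indeg a x).+1.
Proof.
rewrite /bdegY; have -> : [set x' | e x' (m x)] = x |: [set x' | a x' x].
  apply/setP => x'; rewrite !inE aE /matching_digraph.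
  by case: eqVneq => [->|]; rewrite ?e_mate.
by rewrite cardsU1 inE aE /matching_digraph eqxx.
Qed.

Lemma sigma11_ge_ore (n : nat) :
  sigma11_ge e (n + 2) <->
  (forall u v, u != v -> ~~ a u v -> n <= outdeg a u + indeg a v).
Proof.
split=> [sigma u v uv nauv | ore x y nexy].
  have := sigma u (m v); rewrite bdegX_outdeg bdegY_indeg.
  by rewrite aE /matching_digraph uv in nauv => /(_ nauv); lia.
rewrite -(minvK y) in nexy *; rewrite bdegX_outdeg bdegY_indeg.
have xv : x != minv y by apply: contraNneq nexy => ->.
have := ore x (minv y) xv; rewrite aE /matching_digraph xv (negbTE nexy); lia.
Qed.

Lemma dir_2factor_two_factorP (k : nat) :
  has_dir_2factor_k a k <->
  exists F, two_factor_k e F k /\ matching_graph m \subset F.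
Proof.
split=> [[s [arc ncomp long]] | [F [twoF MF]]].
  have s_fixfree x : s x != x by move: (arc x); rewrite aE eq_sym => /andP [].
  exists (cycle_edges m s); split.
    apply/(two_factor_cycle_edgesP _ e_mate s_fixfree); split=> // x.
    by move: (arc x); rewrite aE => /andP [].
  by apply/subsetP => -[x y]; rewrite !inE => ->.
case: (twoF) => _ degX degY _ _.
have [s s_fixfree FE] := cycle_edges_of_two_factor degX degY MF.
move: twoF; rewrite FE => /two_factor_cycle_edgesP -/(_ e_mate s_fixfree).
case=> e_s ncomp long; exists s; split=> // x.
by rewrite aE /matching_digraph eq_sym s_fixfree e_s.
Qed.

End MatchingDigraph.

End MatchingCorrespondence.

Lemma statementA_statementB : statementA -> statementB.
Proof.
move=> hA k k_gt0 X Y e n Xn _ kn M pmM sigma.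
have [m [[minv mK minvK] -> e_mate]] := perfect_matching_graph pmM.
pose a := matching_digraph e m.
have aE : a =2 matching_digraph e m by [].
apply/(dir_2factor_two_factorP mK minvK e_mate aE)/hA; rewrite ?Xn //.
- by move=> x; rewrite /a /matching_digraph eqxx.
- exact/(sigma11_ge_ore mK minvK e_mate aE).
Qed.

Lemma statementB_statementA : statementB -> statementA.
Proof.
move=> hB k k_gt0 T a a_irr kn ore.
pose e x y := a x y || (x == y).
have e_mate x : e x (id x) by rewrite /e eqxx orbT.
have idK : cancel (@id T) id by [].
have aE : a =2 matching_digraph e id.
  by move=> x y; rewrite /matching_digraph /e; case: eqVneq => [<-|]; rewrite ?a_irr ?orbF.
apply/(dir_2factor_two_factorP idK idK e_mate aE)/(hB k k_gt0 T T e #|T|) => //.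
- exact: matching_graph_perfect.
- exact/(sigma11_ge_ore idK idK e_mate aE).
Qed.

Theorem proposition1 : statementA <-> statementB.
Proof. by split; [exact: statementA_statementB | exact: statementB_statementA]. Qed.
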